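(* Let $d\ge2$. There is a constant $C_d>0$ depending only on $d$ such that for all finite sets $X,Y\subset\mathbb{Z}^d$, $$\#(X\setminus Y)\le|\zeta(X)\setminus\zeta(Y)|+C_dP(Y),\qquad\text{and hence}\qquad \#(X\,\Delta\,Y)\le|\zeta(X)\,\Delta\,\zeta(Y)|+C_d\big(P(X)+P(Y)\big).$$
   Context: For $X\subset\mathbb{Z}^d$ and $p\in X$, $\mathrm{val}(p)=\#\{q\in\mathbb{Z}^d\setminus X:|p-q|=1\}$ and $P(X)=\sum_{p\in X}\mathrm{val}(p)$. Kuhn decomposition: for a permutation $\pi$ of $\{1,\dots,d\}$, $T_\pi=\{x\in\mathbb{R}^d:0\le x_{\pi(d)}\le\dots\le x_{\pi(1)}\le1\}$, $\mathcal{T}=\{z+T_\pi:z\in\mathbb{Z}^d,\pi\}$, $\mathcal T(i)=\{T\in\mathcal T:i\in T\}$, and $\zeta(X)=\bigcup_{i\in X}\bigcup_{T\in\mathcal T(i)}T$. $|\cdot|$ is Lebesgue measure, $\#$ cardinality, $\Delta$ symmetric difference. *)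

From HB Require Import structures.
From mathcomp Require Import all_boot all_order all_algebra all_fingroup.
From mathcomp Require Import finmap.
From mathcomp Require Import all_classical all_reals all_analysis.

Set Implicit Arguments.
Unset Strict Implicit.
Unset Printing Implicit Defensive.

Import Order.TTheory GRing.Theory Num.Theory.
Local Open Scope classical_set_scope.
Local Open Scope ring_scope.

Section Defs.
Variable R : realType.

Definition zpt (d : nat) := {ffun 'I_d -> int}.
Definition rpt (d : nat) := 'I_d -> R.

Definition nbrs (d : nat) (p : zpt d) : {fset zpt d} :=
  ([fset ([ffun j => (p j + (j == i)%:Z)%R] : zpt d) | i in 'I_d] `|`
   [fset ([ffun j => (p j - (j == i)%:Z)%R] : zpt d) | i in 'I_d])%fset.

Definition valence (d : nat) (X : {fset zpt d}) (p : zpt d) : nat :=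
  #|` [fset q in nbrs p | q \notin X] |%fset.

Definition perimeter (d : nat) (X : {fset zpt d}) : nat :=
  (\sum_(p <- X) valence X p)%N.

(* T_pi = { x : 0 <= x_{pi(d)} <= ... <= x_{pi(1)} <= 1 } (0-indexed here) *)
Definition T_pi (d : nat) (pi : 'S_d) : set (rpt d) :=
  [set x | (forall i : 'I_d, 0 <= x i <= 1) /\
           (forall k l : 'I_d, (k <= l)%N -> x (pi l) <= x (pi k))].

Definition kuhn (d : nat) (z : zpt d) (pi : 'S_d) : set (rpt d) :=
  [set y | T_pi pi (fun j => y j - (z j)%:~R)].

Definition embed (d : nat) (i : zpt d) : rpt d := fun j => (i j)%:~R.

Definition zeta (d : nat) (X : {fset zpt d}) : set (rpt d) :=
  [set y | exists i, i \in X /\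
     exists (z : zpt d) (pi : 'S_d), kuhn z pi (embed i) /\ kuhn z pi y].

Definition box (d : nat) (a b : rpt d) : set (rpt d) :=
  [set x | forall i : 'I_d, a i <= x i <= b i].

(* Lebesgue (outer) measure on R^d: infimum of total volumes of countable
   box covers.  On the sets considered here (finite unions of simplices,
   hence Lebesgue measurable) it is the Lebesgue measure. *)
Definition leb (d : nat) (A : set (rpt d)) : \bar R :=
  ereal_inf [set (\sum_(k <oo) (\prod_(i < d) (ab.2 k i - ab.1 k i))%:E)%E
            | ab in [set ab : (nat -> rpt d) * (nat -> rpt d) |
                (forall k i, ab.1 k i <= ab.2 k i) /\
                A `<=` \bigcup_k box (ab.1 k) (ab.2 k)]].

End Defs.

From HB Require Import structures.
From mathcomp Require Import all_boot all_order all_algebra all_fingroup.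
From mathcomp Require Import finmap.
From mathcomp Require Import all_classical all_reals all_analysis.
From mathcomp Require Import zify ring lra.
Import Order.TTheory GRing.Theory Num.Theory numFieldNormedType.Exports.

Set Implicit Arguments.
Unset Strict Implicit.
Unset Printing Implicit Defensive.
Local Open Scope classical_set_scope.
Local Open Scope ring_scope.

(* Let i be a point of X \ Y.  If no vertex of the unit cube [i, i+1]^d lies
   in Y, the whole open unit cube at i lies in zeta(X) \ zeta(Y): it is covered
   by the Kuhn simplices at i, and a Kuhn simplex meeting it has all its
   vertices among the vertices of that cube.  Otherwise, taking the vertex
   i + e in Y with e minimal shows that i + e has a neighbour outside Y, so i is
   recovered, up to 2^d choices, from a point of Y of positive valence: there
   are at most 2^d P(Y) such i.  Finally, disjoint open unit cubes have total
   outer measure at least their number, which is shown by counting the points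
   of a fine grid in slightly shrunken cubes against a finite subcover by
   slightly enlarged boxes. *)

Section LatticeCubes.
Local Open Scope fset_scope.
Variable d : nat.
Implicit Types (i w : zpt d) (e : {ffun 'I_d -> bool}) (Y Z : {fset zpt d}).

Definition cube_vertex i e : zpt d := [ffun j => (i j + (e j)%:Z)%R].

Definition cube_meets Y i := [exists e : {ffun 'I_d -> bool}, cube_vertex i e \in Y].

Definition lower_corners w : {fset zpt d} :=
  [fset ([ffun j => (w j - (e j)%:Z)%R] : zpt d)
  | e : {ffun 'I_d -> bool} in enum {ffun 'I_d -> bool}].

Lemma card_lower_corners w : (#|` lower_corners w| <= 2 ^ d)%N.
Proof.
apply: (leq_trans (leq_imfset_card _ _ _)); apply: (leq_trans (size_undup _)).
by rewrite -cardE card_ffun card_bool card_ord.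
Qed.

Lemma mem_lower_corners i e : i \in lower_corners (cube_vertex i e).
Proof.
apply/imfsetP; exists e; first by rewrite mem_enum.
by apply/ffunP => j; rewrite !ffunE addrK.
Qed.

Lemma cube_meets_boundary Y i : i \notin Y -> cube_meets Y i ->
  exists2 w, (w \in Y) && (0 < valence Y w)%N & i \in lower_corners w.
Proof.
move=> iNY /existsP [e0 he0].
case: (@arg_minnP _ e0 (fun e => cube_vertex i e \in Y) (fun e => #|[set j | e j]%SET|) he0)
  => e wY minm.
have [j0 ej0] : exists j0, e j0.
  apply/existsP; apply: contraR iNY => /existsPn eF.
  suff <- : cube_vertex i e = i by [].
  by apply/ffunP => j; rewrite ffunE (negbTE (eF j)) addr0.
pose e' := [ffun j => e j && (j != j0)].
have e'NY : cube_vertex i e' \notin Y.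
  apply/negP => /minm; rewrite leqNgt => /negP; apply; apply: proper_card.
  rewrite properE; apply/andP; split.
    by apply/fintype.subsetP => j; rewrite !inE ffunE => /andP [].
  by apply/fintype.subsetPn; exists j0; rewrite !inE ?ffunE ?eqxx ?andbF.
exists (cube_vertex i e); last exact: mem_lower_corners.
rewrite wY /valence cardfs_gt0; apply/fset0Pn; exists (cube_vertex i e').
rewrite !inE e'NY andbT; apply/orP; right; apply/imfsetP; exists j0 => //.
apply/ffunP => j; rewrite !ffunE.
by case: (eqVneq j j0) => [->|_]; rewrite ?ej0 /= ?andbT ?subr0 //; lia.
Qed.

Lemma card_bigfcup (s : seq (zpt d)) (P : pred (zpt d)) (F : zpt d -> {fset zpt d}) :
  (#|` \bigcup_(w <- s | P w) F w| <= \sum_(w <- s | P w) #|` F w|)%N.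
Proof.
elim/big_rec2: _ => [|w n U _ leUn]; first by rewrite cardfs0.
by rewrite (leq_trans (leq_card_fsetU _ U).1) ?leq_add2l.
Qed.

Lemma card_cube_meets Z Y :
  (#|` [fset i in Z `\` Y | cube_meets Y i]| <= 2 ^ d * perimeter Y)%N.
Proof.
have sub : [fset i in Z `\` Y | cube_meets Y i] `<=`
    \bigcup_(w <- Y | (0 < valence Y w)%N) lower_corners w.
  apply/fsubsetP => i; rewrite !inE => /andP [/andP [iNY _] iY].
  have [w wY iw] := cube_meets_boundary iNY iY.
  by apply/bigfcupP; exists w.
apply: leq_trans (fsubset_leq_card sub) _; apply: leq_trans (card_bigfcup _ _ _) _.
rewrite big_mkcond /perimeter big_distrr /=; apply: leq_sum => w _.
by case: ifP => // v0; rewrite (leq_trans (card_lower_corners w)) ?leq_pmulr.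
Qed.

End LatticeCubes.

Lemma exists_sorting_perm (disp : Order.disp_t) (T : orderType disp) (d : nat)
    (y : 'I_d -> T) :
  exists pi : 'S_d, forall k l : 'I_d, (k <= l)%N -> (y (pi l) <= y (pi k))%O.
Proof.
pose leT := [rel a b : 'I_d | (y b <= y a)%O].
have leT_tr : transitive leT by move=> b a c /= ba cb; apply: le_trans cb ba.
have leT_total : total leT by move=> a b; apply: le_total.
have : perm_eq (sort leT (enum 'I_d)) (ord_tuple d) by rewrite perm_sort.
case/tuple_permP => pi sE; exists pi => k l kl.
have nthE (m : 'I_d) : nth k (sort leT (enum 'I_d)) m = pi m.
  by rewrite sE -tnth_nth tnth_mktuple tnth_ord_tuple.
rewrite -!nthE; apply: (sorted_leq_nth leT_tr (fun a => lexx (y a))) => //;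
  by rewrite ?(sort_sorted leT_total) ?inE ?size_sort ?size_enum_ord.
Qed.

Section Kuhn.
Variables (R : realType) (d : nat).
Implicit Types (i : zpt d) (x : rpt R d) (X : {fset zpt d}).

Definition open_cube i : set (rpt R d) :=
  [set x | forall j, (i j)%:~R < x j < (i j)%:~R + 1].

Lemma open_cube_sub_zeta X i : i \in X -> open_cube i `<=` zeta X.
Proof.
move=> iX x hx.
have [pi hpi] := exists_sorting_perm (fun j => x j - (i j)%:~R).
exists i; split => //; exists i, pi; split.
  by rewrite /kuhn /T_pi /embed /=; split => [j|k l _]; rewrite subrr; lra.
split => [j|//]; have /andP [h1 h2] := hx j; apply/andP; split; lra.
Qed.

Lemma open_cube_zeta_meets X i x : open_cube i x -> zeta X x -> cube_meets X i.
Proof.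
move=> hx [v [vX [z [pi [[hv _] [hz _]]]]]].
have zi j : z j = i j.
  have /andP [a1 a2] := hx j; have /andP [b1 b2] := hz j.
  have c1 : (z j)%:~R < (i j + 1)%:~R :> R by rewrite intrD; lra.
  have c2 : (i j)%:~R < (z j + 1)%:~R :> R by rewrite intrD; lra.
  by rewrite ltr_int in c1; rewrite ltr_int in c2; lia.
apply/existsP; exists [ffun j => v j != i j].
suff -> : cube_vertex i [ffun j => v j != i j] = v by [].
apply/ffunP => j; rewrite !ffunE.
have /andP [b1 b2] := hv j; rewrite /embed zi in b1 b2.
have c1 : (i j)%:~R <= (v j)%:~R :> R by lra.
have c2 : (v j)%:~R <= (i j + 1)%:~R :> R by rewrite intrD; lra.
rewrite ler_int in c1; rewrite ler_int in c2.
case: eqVneq => [->|vi] /=; first by rewrite addr0.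
have h : i j < v j by rewrite lt_neqAle c1 andbT eq_sym.
by rewrite -lezD1 in h; apply/le_anti; rewrite h c2.
Qed.

End Kuhn.

Lemma sum_nat_itv_ord (W lo hi : nat) :
  (\sum_(x < W) ((lo <= x) && (x <= hi)))%N = (minn W hi.+1 - lo)%N.
Proof.
elim: W => [|W IH]; first by rewrite big_ord0 min0n.
rewrite big_ord_recr /= IH.
by case: (leqP lo W) => h1; case: (leqP W hi) => h2 /=; lia.
Qed.

Lemma sum_ffun_forall (d W : nat) (Q : 'I_d -> pred 'I_W) :
  (\sum_(g : {ffun 'I_d -> 'I_W}) [forall j, Q j (g j)])%N =
  (\prod_(j < d) \sum_(x < W) Q j x)%N.
Proof.
rewrite bigA_distr_bigA; apply: eq_bigr => g _.
case: (boolP [forall j, Q j (g j)]) => [/forallP Qg|/forallPn [j Qgj]].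
  by rewrite big1 // => j _; rewrite Qg.
by rewrite (bigD1 j) //= (negbTE Qgj) mul0n.
Qed.

Lemma card_ord_pred_le_diam (R : numDomainType) (W : nat) (P : pred 'I_W) (L : R) :
  0 <= L -> (forall x y : 'I_W, P x -> P y -> (y : nat)%:R - (x : nat)%:R <= L) ->
  (\sum_(x < W) P x)%N%:R <= L + 1.
Proof.
move=> L0 diamP.
case: (pickP P) => [x0 Px0|P0]; last first.
  by rewrite big1 ?add0r ?ler_wpDl ?ler01 // => x _; rewrite P0.
case: (arg_minnP (fun x : 'I_W => (x : nat)) Px0) => xm Pxm minm.
case: (arg_maxnP (fun x : 'I_W => (x : nat)) Px0) => xM PxM maxM.
have hmM : (xm <= xM)%N by apply: minm.
have : (\sum_(x < W) P x <= \sum_(x < W) ((xm <= x) && (x <= xM)))%N.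
  apply: leq_sum => x _; case Px: (P x) => //.
  by have := maxM _ Px; rewrite /geq /= (minm _ Px) => ->.
rewrite sum_nat_itv_ord => le1.
have le2 : (\sum_(x < W) P x <= xM.+1 - xm)%N by apply: (leq_trans le1); lia.
apply: (le_trans (y := (xM.+1 - xm)%N%:R)); first by rewrite ler_nat.
by rewrite subSn // -addn1 natrD natrB // lerD2r; apply: diamP.
Qed.

Section Grid.
Variables (R : realType) (d N B : nat).
Hypothesis N_gt0 : (0 < N)%N.
Local Notation W := (N * (2 * B + 1)).+1.
Implicit Types (g : {ffun 'I_d -> 'I_W}) (i : zpt d).

(* The window ['I_W] encodes the grid points of spacing [1/N] in [[-B, B + 1]];
   [cube_offset] shifts the coordinates of a lattice point with [|i j| <= B]
   into [[0, 2B]]. *)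
Definition grid_coord (x : 'I_W) : R := ((x : nat)%:R - (N * B)%:R) / N%:R.

Definition cube_offset i j := absz (i j + B%:Z).

Definition in_grid_cube (t : nat) i g :=
  [forall j, (N * cube_offset i j + t <= g j <= N * cube_offset i j + (N - t))%N].

Definition in_grid_box (c e : 'I_d -> R) g := [forall j, c j <= grid_coord (g j) <= e j].

Lemma cube_offsetE i j : (`|i j| <= B)%N -> (cube_offset i j)%:R = (i j)%:~R + B%:R :> R.
Proof.
move=> iB; have : (0 <= i j + B%:Z)%R by move: iB; case: (i j) => n /=; lia.
by move=> ?; rewrite natr_absz ger0_norm // rmorphD.
Qed.

Lemma cube_offset_le i j : (`|i j| <= B)%N -> (cube_offset i j <= 2 * B)%N.
Proof. by rewrite /cube_offset; case: (i j) => n /=; lia. Qed.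

Lemma card_grid_cube t i : (2 * t <= N)%N -> (forall j, `|i j| <= B)%N ->
  (\sum_g in_grid_cube t i g)%N = ((N - 2 * t).+1 ^ d)%N.
Proof.
move=> tN iB; rewrite (sum_ffun_forall (fun j (x : 'I_W) =>
  (N * cube_offset i j + t <= x <= N * cube_offset i j + (N - t))%N)).
rewrite -[in RHS](card_ord d) -prod_nat_const; apply: eq_bigr => j _.
by rewrite sum_nat_itv_ord; have := cube_offset_le (iB j); nia.
Qed.

Lemma in_grid_cube_inj t i i' g : (0 < t)%N ->
  (forall j, `|i j| <= B)%N -> (forall j, `|i' j| <= B)%N ->
  in_grid_cube t i g -> in_grid_cube t i' g -> i = i'.
Proof.
move=> t_gt0 iB i'B /forallP gi /forallP gi'; apply/ffunP => j.
have : cube_offset i j = cube_offset i' j.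
  have := gi j; have := gi' j => /andP [? ?] /andP [? ?].
  have h1 : (N * cube_offset i j < N * (cube_offset i' j).+1)%N by lia.
  have h2 : (N * cube_offset i' j < N * (cube_offset i j).+1)%N by lia.
  by rewrite ltn_pmul2l // in h1; rewrite ltn_pmul2l // in h2; lia.
by move: (iB j) (i'B j); rewrite /cube_offset; case: (i j) => ?; case: (i' j) => ? /=; lia.
Qed.

Lemma grid_coord_in_cube t i g j : (t <= N)%N -> (`|i j| <= B)%N -> in_grid_cube t i g ->
  (i j)%:~R + t%:R / N%:R <= grid_coord (g j) <= (i j)%:~R + 1 - t%:R / N%:R.
Proof.
move=> tN iB /forallP/(_ j)/andP [lo hi].
have N0 : (N%:R : R) != 0 by rewrite pnatr_eq0 -lt0n.
rewrite /grid_coord -[(i j)%:~R](addrK B%:R) -cube_offsetE //.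
move: lo hi; rewrite -!(ler_nat R) !natrD natrB; last by lia.
rewrite !natrM; set o := (cube_offset i j)%:R; set x := ((g j : nat)%:R : R).
move=> lo hi.
have -> : o - B%:R + t%:R / N%:R = (N%:R * o + t%:R - N%:R * B%:R) / N%:R by field.
have -> : o - B%:R + 1 - t%:R / N%:R =
  (N%:R * o + (N%:R - t%:R) - N%:R * B%:R) / N%:R by field.
by rewrite !ler_pM2r ?invr_gt0 ?ltr0n // !lerB ?lo ?hi.
Qed.

Lemma card_grid_box (c e : 'I_d -> R) : (forall j, c j <= e j) ->
  (\sum_g in_grid_box c e g)%N%:R <= \prod_(j < d) (N%:R * (e j - c j) + 1).
Proof.
move=> ce; rewrite (sum_ffun_forall (fun j (x : 'I_W) => c j <= grid_coord x <= e j)).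
rewrite natr_prod; apply: ler_prod => j _; rewrite ler0n /=.
apply: card_ord_pred_le_diam; first by rewrite mulr_ge0 ?ler0n ?subr_ge0.
move=> x y /andP [? ?] /andP [? ?].
have -> : (y : nat)%:R - (x : nat)%:R = N%:R * (grid_coord y - grid_coord x) :> R.
  by rewrite /grid_coord; field; rewrite pnatr_eq0 -lt0n.
by rewrite ler_wpM2l ?ler0n //; lra.
Qed.

End Grid.

Lemma card_mul_grid_le_cover (R : realType) (d N t K : nat) (S : {fset zpt d})
    (c e : nat -> 'I_d -> R) :
  (0 < t)%N -> (2 * t <= N)%N -> (forall k j, c k j <= e k j) ->
  (forall i (x : rpt R d), i \in S ->
     (forall j, (i j)%:~R + t%:R / N%:R <= x j <= (i j)%:~R + 1 - t%:R / N%:R) ->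
     exists2 k, (k < K)%N & forall j, c k j <= x j <= e k j) ->
  (#|`S| * (N - 2 * t).+1 ^ d)%N%:R <=
    \sum_(k < K) \prod_(j < d) (N%:R * (e k j - c k j) + 1).
Proof.
move=> t_gt0 tN ce cover.
have N_gt0 : (0 < N)%N by lia.
have tN' : (t <= N)%N by lia.
pose B := (\sum_(i <- S) \sum_(j < d) `|i j|)%N.
have SB i j : i \in S -> (`|i j| <= B)%N.
  move=> iS; rewrite /B (big_rem i) //= (bigD1 j) //= -addnA; exact: leq_addr.
have cubes_le_boxes (g : {ffun 'I_d -> 'I_(N * (2 * B + 1)).+1}) :
    (\sum_(i <- S) in_grid_cube t i g <= \sum_(k < K) in_grid_box (c k) (e k) g)%N.
  case: (boolP (has (in_grid_cube t ^~ g) S)) => [/hasP [i iS gi]|/hasPn gS]; last first.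
    by rewrite big1_seq // => i /andP [_ iS]; rewrite (negbTE (gS i iS)).
  rewrite (bigD1_seq i) ?fset_uniq //= gi big1_seq ?addn0; last first.
    move=> i' /andP [i'i i'S]; apply/eqP; rewrite eqb0; apply: contra i'i => gi'.
    by apply/eqP; apply: (in_grid_cube_inj N_gt0 t_gt0 _ _ gi' gi) => j; apply: SB.
  have [k kK gk] := cover i _ iS (fun j => grid_coord_in_cube R N_gt0 tN' (SB i j iS) gi).
  by rewrite (bigD1 (Ordinal kK)) //= (_ : in_grid_box _ _ _ = true) ?leq_addr //; apply/forallP.
have : (#|`S| * (N - 2 * t).+1 ^ d <= \sum_(k < K)
    \sum_(g : {ffun 'I_d -> 'I_(N * (2 * B + 1)).+1}) in_grid_box (c k) (e k) g)%N.
  rewrite mulnC -[#|`S|]count_predT -iter_addn_0 -big_const_seq.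
  rewrite (eq_big_seq _ (fun i iS => esym (card_grid_cube N_gt0 tN (fun j => SB i j iS)))).
  by rewrite exchange_big [X in (_ <= X)%N]exchange_big; apply: leq_sum.
rewrite -(ler_nat R) natr_sum => /le_trans; apply; apply: ler_sum => k _.
exact: card_grid_box N_gt0 _ _ (ce k).
Qed.

Lemma card_mul_shrink_le_cover (R : realType) (d M T K : nat) (S : {fset zpt d})
    (c e : nat -> 'I_d -> R) :
  (0 < T)%N -> (2 <= M)%N -> (forall k j, c k j <= e k j) ->
  (forall i (x : rpt R d), i \in S ->
     (forall j, (i j)%:~R + (M%:R)^-1 <= x j <= (i j)%:~R + 1 - (M%:R)^-1) ->
     exists2 k, (k < K)%N & forall j, c k j <= x j <= e k j) ->
  #|`S|%:R * (1 - 2 / M%:R) ^+ d <=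
    \sum_(k < K) \prod_(j < d) (e k j - c k j + ((M * T)%:R)^-1).
Proof.
move=> T_gt0 M2 ce cover.
set N := (M * T)%N.
have N_gt0 : (0 < N)%N by rewrite /N; lia.
have N0 : (N%:R : R) != 0 by rewrite pnatr_eq0 -lt0n.
have M0 : (M%:R : R) != 0 by rewrite pnatr_eq0; lia.
have margin : T%:R / N%:R = (M%:R : R)^-1.
  by rewrite /N natrM; field; rewrite M0 pnatr_eq0 -lt0n T_gt0.
have G : (#|`S| * (N - 2 * T).+1 ^ d)%N%:R <=
    \sum_(k < K) \prod_(j < d) (N%:R * (e k j - c k j) + 1) :> R.
  apply: card_mul_grid_le_cover => //; first by rewrite /N; nia.
  by move=> i x iS; rewrite margin; exact: cover.
have scale k : \prod_(j < d) (N%:R * (e k j - c k j) + 1) =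
    N%:R ^+ d * \prod_(j < d) (e k j - c k j + (N%:R)^-1).
  rewrite -[d in N%:R ^+ d]card_ord -prodr_const -big_split /=.
  by apply: eq_bigr => j _; field.
rewrite (eq_bigr _ (fun (k : 'I_K) _ => scale k)) -mulr_sumr natrM natrX in G.
rewrite -(ler_pM2l (_ : 0 < N%:R ^+ d)) ?exprn_gt0 ?ltr0n //; apply: le_trans G.
rewrite mulrCA -exprMn ler_wpM2l ?ler0n // lerXn2r ?nnegrE ?ler0n //.
- by rewrite mulr_ge0 ?ler0n // subr_ge0 ler_pdivrMr ?ltr0n ?mul1r ?(ler_nat R 2) //; lia.
- have -> : (N%:R : R) * (1 - 2 / M%:R) = N%:R - 2 * T%:R.
    by rewrite /N natrM; field.
  by rewrite -[(N - 2 * T).+1]addn1 natrD natrB ?natrM; [lra | rewrite /N; nia].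
Qed.

(* [compact_cover] is stated for pointed spaces, hence the instance below. *)
Definition real_coord (R : realType) (d : nat) := fun _ : 'I_d => (R : ptopologicalType).
Arguments real_coord : clear implicits.

HB.instance Definition _ (R : realType) (d : nat) :=
  Pointed.copy (prod_topology (real_coord R d)) (forall j, real_coord R d j).

Section BoxCompactness.
Variables (R : realType) (d : nat).
Local Notation P := (prod_topology (real_coord R d)).

Lemma open_box (l u : 'I_d -> R) : open [set x : P | forall j, l j < x j < u j].
Proof.
have -> : [set x : P | forall j, l j < x j < u j] =
    [set x : P | forall j, j \in enum 'I_d -> l j < x j < u j].
  by apply/seteqP; split => x xlu j; rewrite ?mem_enum //; apply: xlu; rewrite mem_enum.
set s := enum 'I_d; clearbody s.
elim: s => [|j s IH].
  suff -> : [set x : P | forall j, j \in [::] -> l j < x j < u j] = setT by exact: openT.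
  by apply/seteqP; split => x //= _ j; rewrite in_nil.
have -> : [set x : P | forall k, k \in j :: s -> l k < x k < u k] =
    (@proj 'I_d (real_coord R d) j @^-1` `]l j, u j[) `&`
    [set x : P | forall k, k \in s -> l k < x k < u k].
  apply/seteqP; split => x /=.
    move=> xlu; split; first by rewrite in_itv /=; apply: xlu; rewrite mem_head.
    by move=> k ks; apply: xlu; rewrite in_cons ks orbT.
  by move=> [xj xs] k; rewrite in_cons => /orP [/eqP ->|/xs //]; move: xj; rewrite in_itv.
apply: openI => //; apply: open_comp; last exact: interval_open.
by move=> x _; exact: proj_continuous.
Qed.

Lemma box_compact (lo hi : 'I_d -> R) : compact [set x : P | forall j, lo j <= x j <= hi j].
Proof.
have -> : [set x : P | forall j, lo j <= x j <= hi j] =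
    [set x : P | forall j, [set` `[lo j, hi j]] (x j)].
  by apply/seteqP; split => x xb j; move: (xb j); rewrite /= in_itv.
apply: (@tychonoff 'I_d (real_coord R d) (fun j => [set` `[lo j, hi j]])) => j.
exact: segment_compact.
Qed.

Lemma compact_finite_box_cover (C : set P) (l u : nat -> 'I_d -> R) : compact C ->
  C `<=` \bigcup_k [set x : P | forall j, l k j < x j < u k j] ->
  exists K, forall x, C x -> exists2 k, (k < K)%N & forall j, l k j < x j < u k j.
Proof.
rewrite compact_cover => Ccpt Ccov.
have [D _ DC] := Ccpt nat setT _ (fun k _ => open_box (l k) (u k)) Ccov.
exists (\max_(k <- D) k).+1 => x /DC [k kD xk]; exists k => //.
by rewrite ltnS (leq_bigmax_seq _ kD).
Qed.

End BoxCompactness.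

Section Estimates.
Variable R : realFieldType.

Lemma prod_addr_le (n : nat) (F : 'I_n -> R) (s : R) :
  (forall i, 0 <= F i) -> 0 <= s <= 1 ->
  \prod_(i < n) (F i + s) <= \prod_(i < n) F i + s * 2 ^+ n * \prod_(i < n) (F i + 1).
Proof.
move=> + /andP [s0 s1]; elim: n F => [|n IH] F F0.
  by rewrite !big_ord0 expr0 !mulr1 lerDl.
rewrite !big_ord_recl exprS.
have := IH (fun i => F (lift ord0 i)) (fun i => F0 _).
set P := \prod_(i < n) _; set A := \prod_(i < n) _; set Q := \prod_(i < n) _.
set c := 2 ^+ n; set x := F ord0 => IHP.
have x0 : 0 <= x := F0 ord0.
have A0 : 0 <= A by apply: prodr_ge0.
have AQ : A <= Q by apply: ler_prod => i _; rewrite F0 lerDl ler01.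
have c1 : 1 <= c by apply: exprn_ege1; lra.
have cQ0 : 0 <= c * Q by rewrite mulr_ge0 ?(le_trans A0 AQ) // (le_trans _ c1).
have : (x + s) * P <= (x + s) * (A + s * c * Q) by rewrite ler_wpM2l ?addr_ge0.
move=> /le_trans; apply.
have t1 : s * A <= s * (c * Q) by rewrite ler_wpM2l // (le_trans AQ) // ler_peMl // (le_trans A0).
have t2 : s * (s * (c * Q)) <= s * (c * Q) by rewrite ler_wpM2l // ler_piMl.
have t3 : 0 <= s * (c * Q * x) by apply: mulr_ge0 => //; apply: mulr_ge0.
have -> : (x + s) * (A + s * c * Q) =
  x * A + (s * A + s * (s * (c * Q))) + s * (c * Q * x) by ring.
have -> : x * A + s * (2 * c) * ((x + 1) * Q) =
  x * A + 2 * (s * (c * Q)) + 2 * (s * (c * Q * x)) by ring.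
lra.
Qed.

Lemma bernoulli_ineq (u : R) (n : nat) : 0 <= u <= 1 -> 1 - n%:R * u <= (1 - u) ^+ n.
Proof.
move=> /andP [u0 u1]; elim: n => [|n IH]; first by rewrite mul0r subr0 expr0.
have : 0 <= (1 - u) ^+ n by apply: exprn_ge0; lra.
have : 0 <= u * (n%:R * u) by rewrite !mulr_ge0.
by rewrite exprS -natr1; nra.
Qed.

Lemma sum_inv_pow2 (K : nat) : \sum_(k < K) (2 ^+ k.+1)^-1 = 1 - (2 ^+ K)^-1 :> R.
Proof.
elim: K => [|K IH]; first by rewrite big_ord0 expr0 invr1 subrr.
rewrite big_ord_recr /= IH exprS.
have : (2 ^+ K : R) != 0 by rewrite expf_neq0 // pnatr_eq0.
by move=> ?; field.
Qed.

Lemma prod_enlarge_le (n : nat) (a b : 'I_n -> R) (r u : R) :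
  (forall j, a j <= b j) -> 0 <= 2 * r + u <= 1 ->
  \prod_(j < n) (b j + r - (a j - r) + u) <= \prod_(j < n) (b j - a j) +
    2 * r * 2 ^+ n * \prod_(j < n) (b j - a j + 1) +
    u * 2 ^+ n * \prod_(j < n) (b j - a j + 1).
Proof.
move=> ab s01; have L0 j : 0 <= b j - a j by rewrite subr_ge0.
have -> : \prod_(j < n) (b j + r - (a j - r) + u) = \prod_(j < n) (b j - a j + (2 * r + u)).
  by apply: eq_bigr => j _; ring.
by apply: le_trans (prod_addr_le L0 s01) _; rewrite -addrA lerD2l !mulrDl.
Qed.

Lemma slack_bounds (et C q : R) (k : nat) : 0 < et <= 1 -> 1 <= C -> 1 <= q ->
  0 < et / (12 * C * q * 2 ^+ k.+1) <= 1 / 12.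
Proof.
move=> /andP [et0 et1] C1 q1.
have : 1 <= C * (q * 2 ^+ k.+1) by rewrite !mulr_ege1 // exprn_ege1 // (ler_nat R 1 2).
rewrite !mulrA => den1; rewrite divr_gt0 //=; last by lra.
by rewrite ler_pdivrMr; [nra | lra].
Qed.

Lemma sum_slack_le (et C : R) (Q : nat -> R) (K : nat) :
  0 < et -> 0 < C -> (forall k, 0 < Q k) ->
  \sum_(k < K) 2 * (et / (12 * C * Q k * 2 ^+ k.+1)) * C * Q k <= et / 6.
Proof.
move=> et0 C0 Q0.
have -> : \sum_(k < K) 2 * (et / (12 * C * Q k * 2 ^+ k.+1)) * C * Q k =
    et / 6 * \sum_(k < K) (2 ^+ k.+1)^-1.
  rewrite mulr_sumr; apply: eq_bigr => k _; field.
  by rewrite expf_neq0 ?pnatr_eq0 //= !lt0r_neq0.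
by rewrite sum_inv_pow2 ler_piMr ?divr_ge0 ?ltW // lerBlDr lerDl.
Qed.

End Estimates.

Section CoverBound.
Variables (R : realType) (d : nat).
Local Notation P := (prod_topology (real_coord R d)).

Lemma exists_div_natmul_le (x e : R) (M : nat) : 0 < e -> (0 < M)%N ->
  exists2 T : nat, (0 < T)%N & x / (M * T)%:R <= e.
Proof.
move=> e0 M0.
have [T hT] : exists T : nat, `|x| / e < T%:R.
  exists (Num.Def.archi_bound (`|x| / e)); apply: archi_boundP.
  by rewrite divr_ge0 // ltW.
exists T.+1 => //; rewrite ltr_pdivrMr // in hT.
rewrite ler_pdivrMr ?ltr0n ?muln_gt0 ?M0 //.
have : (T%:R : R) <= (M * T.+1)%:R by rewrite ler_nat; nia.
by move=> /(ler_wpM2l (ltW e0)); have := ler_norm x; lra.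
Qed.

Lemma exists_margin (n et : R) : 0 <= n -> 0 < et ->
  exists2 M : nat, (2 <= M)%N & n - et / 3 <= n * (1 - 2 / M%:R) ^+ d.
Proof.
move=> n0 et0.
have et3 : 0 < et / 3 by rewrite divr_gt0.
have [T T_gt0] := @exists_div_natmul_le (2 * n * d%:R) (et / 3) 2 et3 isT.
set M := (2 * T)%N => nM; exists M; first by rewrite /M; lia.
have u01 : 0 <= 2 / (M%:R : R) <= 1.
  by rewrite divr_ge0 ?ler0n //= ler_pdivrMr ?ltr0n ?mul1r ?(ler_nat R 2) /M //; lia.
apply: le_trans (ler_wpM2l n0 (bernoulli_ineq d u01)).
have -> : n * (1 - d%:R * (2 / M%:R)) = n - 2 * n * d%:R / M%:R by ring.
by rewrite lerD2l lerN2.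
Qed.

Lemma shrunk_cubes_finite_cover (S : {fset zpt d}) (A : set (rpt R d))
    (a b : nat -> 'I_d -> R) (del : nat -> R) (m : R) :
  0 < m -> (forall k, 0 < del k) -> (forall i, i \in S -> open_cube i `<=` A) ->
  A `<=` \bigcup_k box (a k) (b k) ->
  exists K, forall i (x : rpt R d), i \in S ->
    (forall j, (i j)%:~R + m <= x j <= (i j)%:~R + 1 - m) ->
    exists2 k, (k < K)%N & forall j, a k j - del k <= x j <= b k j + del k.
Proof.
move=> m0 del0 SA Acov.
pose C := \big[setU/set0]_(i <- S)
  [set x : P | forall j, (i j)%:~R + m <= x j <= (i j)%:~R + 1 - m].
have Ccpt : compact C by apply: bigsetU_compact => i _; apply: box_compact.
have Ccov : C `<=` \bigcup_k [set x : P | forall j, a k j - del k < x j < b k j + del k].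
  move=> x; rewrite /C -bigcup_seq => -[i /= iS xi].
  have [|k _ xk] := Acov x; first by apply: (SA i iS) => j; have /andP [? ?] := xi j; lra.
  by exists k => // j; have /andP [? ?] := xk j; have := del0 k; lra.
have [K CK] := compact_finite_box_cover Ccpt Ccov.
exists K => i x iS xi; have [|k kK xk] := CK x; first by rewrite /C -bigcup_seq; exists i.
by exists k => // j; have /andP [? ?] := xk j; apply/andP; split; exact: ltW.
Qed.

Lemma card_le_cover_vol (S : {fset zpt d}) (A : set (rpt R d)) (a b : nat -> 'I_d -> R)
    (et : R) :
  (forall i, i \in S -> open_cube i `<=` A) -> (forall k j, a k j <= b k j) ->
  A `<=` \bigcup_k box (a k) (b k) -> 0 < et ->
  exists K, #|`S|%:R <= \sum_(k < K) \prod_(j < d) (b k j - a k j) + et.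
Proof.
move=> SA ab Acov et0; wlog et1 : et et0 / et <= 1.
  move=> wlog_et; have [|/ltW et1] := leP et 1; first exact: wlog_et.
  have [K SK] := wlog_et 1 ltr01 (lexx 1).
  by exists K; apply: le_trans SK _; rewrite lerD2l.
have etP : 0 < et <= 1 by rewrite et0.
(* The error [et] is spent as [et / 3] on shrinking the unit cubes by [1 / M],
   [et / 6] on enlarging the [k]-th box by [del k], and [et / 6] on the grid
   resolution [1 / N]. *)
have [M M2 nM] := exists_margin (ler0n R #|`S|) et0.
pose Q k := \prod_(j < d) (b k j - a k j + 1).
have Q1 k : 1 <= Q k.
  have : \prod_(j < d) (1 : R) <= Q k.
    by apply: ler_prod => j _; rewrite ler01 lerDr subr_ge0 ab.
  by rewrite big1_eq.
pose Cd : R := 2 ^+ d.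
have Cd1 : 1 <= Cd by apply: exprn_ege1; rewrite (ler_nat R 1 2).
pose del k := et / (12 * Cd * Q k * 2 ^+ k.+1).
have del0 k : 0 < del k by have /andP [] := slack_bounds k etP Cd1 (Q1 k).
have M_gt0 : (0 : R) < (M%:R)^-1 by rewrite invr_gt0 ltr0n; lia.
have [K HK] := shrunk_cubes_finite_cover M_gt0 del0 SA Acov.
set X := \sum_(k < K) Q k.
have et6 : 0 < et / 6 by rewrite divr_gt0.
have [T T_gt0 hT] := @exists_div_natmul_le (Cd * X) (et / 6) M et6 (ltnW M2).
have ae k j : a k j - del k <= b k j + del k by have := ab k j; have := del0 k; lra.
have G := card_mul_shrink_le_cover T_gt0 M2 ae HK.
set N := (M * T)%N in G hT.
have N_gt0 : (0 : R) < N%:R by rewrite ltr0n muln_gt0 T_gt0 andbT; lia.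
have vol_enlarged k : \prod_(j < d) (b k j + del k - (a k j - del k) + (N%:R)^-1) <=
    \prod_(j < d) (b k j - a k j) + 2 * del k * Cd * Q k + (N%:R)^-1 * Cd * Q k.
  apply: prod_enlarge_le => //; have /andP [? ?] := slack_bounds k etP Cd1 (Q1 k).
  have : 0 < (N%:R : R)^-1 by rewrite invr_gt0.
  have : (N%:R : R)^-1 <= 2^-1 by rewrite lef_pV2 ?posrE ?ltr0n // ?ler_nat /N; nia.
  by rewrite /del => ? ?; apply/andP; split; lra.
have sum_del : \sum_(k < K) 2 * del k * Cd * Q k <= et / 6.
  by apply: sum_slack_le => // [|k]; [exact: lt_le_trans Cd1 | exact: lt_le_trans (Q1 k)].
exists K; have := le_trans nM (le_trans G (ler_sum _ (fun (k : 'I_K) _ => vol_enlarged k))).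
rewrite !big_split /= -mulr_sumr -/X.
have NX : (N%:R)^-1 * Cd * X <= et / 6 by rewrite -mulrA mulrC.
by move=> ?; lra.
Qed.

End CoverBound.

Lemma leb_ge_card (R : realType) (d : nat) (S : {fset zpt d}) (A : set (rpt R d)) :
  (forall i, i \in S -> open_cube i `<=` A) -> ((#|`S|%:R)%:E <= leb A)%E.
Proof.
move=> SA; apply: le_ereal_inf_tmp => _ [[a b] /= [ab Acov] <-].
apply/lee_addgt0Pr => et et0.
have [K SK] := card_le_cover_vol SA ab Acov et0.
apply: (@le_trans _ _ ((\sum_(k < K) \prod_(j < d) (b k j - a k j))%:E + et%:E)%E).
  by rewrite -EFinD lee_fin.
rewrite leeD2r // -sumEFin -(big_mkord xpredT (fun k => (\prod_(j < d) (b k j - a k j))%:E)).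
by apply: nneseries_lim_ge => k _ _; rewrite lee_fin prodr_ge0 // => j _; rewrite subr_ge0.
Qed.

Lemma exists_good_cubes (R : realType) (d : nat) (X Y : {fset zpt d}) :
  exists G : {fset zpt d}, [/\ (G `<=` X `\` Y)%fset,
    (#|` (X `\` Y)%fset| <= #|` G| + 2 ^ d * perimeter Y)%N &
    forall i, i \in G -> open_cube i `<=` zeta (R:=R) X `\` zeta Y].
Proof.
pose B := [fset i in X `\` Y | cube_meets Y i]%fset.
exists (X `\` Y `\` B)%fset; split.
- exact: fsubsetDl.
- rewrite -(cardfsID B (X `\` Y)%fset) addnC leq_add2l.
  by apply: leq_trans (card_cube_meets X Y); apply/fsubset_leq_card/fsubsetIr.
- move=> i /fsetDP [/fsetDP [iX iNY] iNB] x xi.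
  split; first exact: open_cube_sub_zeta iX _ xi.
  move=> /(open_cube_zeta_meets xi) iY; apply: (negP iNB).
  by rewrite !inE iX (negbTE iNY) iY.
Qed.

Theorem mainTheorem13 (R : realType) (d : nat) (hd : (2 <= d)%N) :
  exists C : R, 0 < C /\
    forall X Y : {fset zpt d},
      ((#|` (X `\` Y)%fset |%:R)%:E
         <= leb (zeta (R:=R) X `\` zeta (R:=R) Y) + (C * (perimeter Y)%:R)%:E)%E /\
      ((#|` ((X `\` Y) `|` (Y `\` X))%fset |%:R)%:E
         <= leb ((zeta (R:=R) X `\` zeta (R:=R) Y) `|` (zeta (R:=R) Y `\` zeta (R:=R) X))
            + (C * ((perimeter X)%:R + (perimeter Y)%:R))%:E)%E.
Proof.
exists (2 ^ d)%:R; split; first by rewrite ltr0n expn_gt0.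
move=> X Y.
have [G1 [sG1 cG1 zG1]] := exists_good_cubes R X Y.
have [G2 [sG2 cG2 zG2]] := exists_good_cubes R Y X.
split.
  apply: le_trans _ (leeD (leb_ge_card zG1) (lexx _)).
  by rewrite -EFinD lee_fin -natrM -natrD ler_nat.
have G12 : [disjoint G1 & G2]%fset.
  apply/fdisjointP => i /(fsubsetP sG1); rewrite !inE => /andP [iNY iX].
  by apply: contraNN iNY => /(fsubsetP sG2); rewrite !inE => /andP [].
have zG i : i \in (G1 `|` G2)%fset ->
    open_cube (R:=R) i `<=` (zeta X `\` zeta Y) `|` (zeta Y `\` zeta X).
  by case/fsetUP => [/zG1 | /zG2] sub x xi; [left | right]; apply: sub.
apply: le_trans _ (leeD (leb_ge_card zG) (lexx _)).
have cU : #|` (G1 `|` G2)%fset| = (#|` G1| + #|` G2|)%N.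
  by apply/eqP; rewrite (leq_card_fsetU G1 G2).2.
rewrite -EFinD lee_fin -natrD -natrM -natrD ler_nat cU mulnDr.
by have := cardfsUI (X `\` Y)%fset (Y `\` X)%fset; lia.
Qed.
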